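(* Let $k$ be a non-negative integer, $a_0,\dots,a_k\in\mathbb{C}$, and suppose $\Lambda=\sum_{i=0}^{k}a_i(Dx)^iD$ is a lowering operator. Let $\{B_n\}_{n\ge0}$ be a monic polynomial sequence with dual sequence $\{u_n\}_{n\ge0}$. The following statements are equivalent: (a) $\{B_n\}$ is $\Lambda$-Appell, i.e. $B^{[1]}_n(x;\Lambda)=B_n(x)$ for all $n\ge0$, where $B^{[1]}_n(x;\Lambda)=(n+1)^{-1}\big(\sum_{i=0}^{k}a_i(n+1)^i\big)^{-1}(\Lambda B_{n+1})(x)$; (b) ${}^t\Lambda(u_n)=\rho_nu_{n+1}$ for all $n\ge0$, where $\rho_n=(n+1)\sum_{i=0}^{k}a_i(n+1)^i$; (c) for all $n\ge0$, $u_n=(n!)^{-1}\Big(\prod_{s=1}^{n}\sum_{i=0}^{k}a_is^i\Big)^{-1}({}^t\Lambda)^nu_0$. Here ${}^t\Lambda=\sum_{i=0}^{k}a_i(-1)^{i+1}(Dx)^iD$ acting on forms.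
   Context: $\mathcal{P}$ is the space of complex polynomials, $\mathcal{P}'$ its algebraic dual, $\langle u,p\rangle$ the action of a form on a polynomial. $D$ is the derivative, $x$ multiplication by $x$, products are compositions. A lowering operator is a linear map $\mathcal{O}:\mathcal{P}\to\mathcal{P}$ with $\mathcal{O}(1)=0$ and $\deg\mathcal{O}(x^n)=n-1$, $n\ge1$. A monic polynomial sequence (MPS) is a sequence $\{B_n\}_{n\ge0}$ with $B_n$ monic of degree $n$; its dual sequence is the unique $\{u_n\}\subset\mathcal{P}'$ with $\langle u_n,B_m\rangle=\delta_{n,m}$. Transposes: $\langle {}^tT u,p\rangle=\langle u,Tp\rangle$; on forms $\langle Du,p\rangle=-\langle u,p'\rangle$ and $\langle xu,p\rangle=\langle u,xp\rangle$. *)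

(* The complex numbers are modelled as  R[i] = complex R
   for an arbitrary  R : realType  (any model of the real numbers). *)
From mathcomp Require Import all_boot all_algebra.
From mathcomp Require Export reals complex.
Set Implicit Arguments. Unset Strict Implicit. Unset Printing Implicit Defensive.
Import GRing.Theory.
Local Open Scope ring_scope.

Section Defs.
Variable C : comNzRingType.

Definition Dx (p : {poly C}) : {poly C} := ('X * p)^`().

Definition Lam (k : nat) (a : nat -> C) (p : {poly C}) : {poly C} :=
  \sum_(i < k.+1) a i *: iter i Dx p^`().

Definition lowering (O : {poly C} -> {poly C}) : Prop :=
  (forall p q : {poly C}, forall c : C, O (c *: p + q) = c *: O p + O q) /\
  O 1 = 0 /\ forall n : nat, (0 < n)%N -> size (O 'X^n) = n.

Definition form := {poly C} -> C.
Definition is_form (u : form) : Prop :=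
  forall (c : C) (p q : {poly C}), u (c *: p + q) = c * u p + u q.

Definition transpose (T : {poly C} -> {poly C}) (u : form) : form :=
  fun p => u (T p).

Definition MPS (B : nat -> {poly C}) : Prop :=
  forall n, B n \is monic /\ size (B n) = n.+1.

Definition dual_seq (B : nat -> {poly C}) (u : nat -> form) : Prop :=
  (forall n, is_form (u n)) /\
  forall n m, u n (B m) = (n == m)%:R.

Definition theta (k : nat) (a : nat -> C) (s : nat) : C :=
  \sum_(i < k.+1) a i * (s%:R) ^+ i.
End Defs.

From mathcomp Require Import all_boot all_algebra.
From mathcomp Require Import reals complex.

Set Implicit Arguments.
Unset Strict Implicit.
Unset Printing Implicit Defensive.
Import GRing.Theory.
Local Open Scope ring_scope.

(* Since Λ x^(n+1) = ρ_n x^n with ρ_n ≠ 0 (Λ is lowering), a form is determined by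
   its values on the basis B and a polynomial by its coordinates <u_j, .>.  Testing
   (b) against B_m turns it into Λ B_(m+1) = ρ_m B_m, which is (a) after dividing by
   ρ_m; (b) and (c) are equivalent by induction on n, using
   n! ∏_(s=1..n) θ(s) = ρ_0 ⋯ ρ_(n-1). *)

Section Forms.
Variable C : comNzRingType.
Implicit Types (u v : {poly C} -> C) (p q : {poly C}).

Lemma form0 u : is_form u -> u 0 = 0.
Proof.
move=> hu; have := hu 1 0 0; rewrite scale1r addr0 mul1r => h.
by apply: (@addrI _ (u 0)); rewrite addr0 -h.
Qed.

Lemma formD u : is_form u -> {morph u : p q / p + q}.
Proof. by move=> hu p q; have := hu 1 p q; rewrite scale1r mul1r. Qed.

Lemma formZ u c p : is_form u -> u (c *: p) = c * u p.
Proof. by move=> hu; have := hu c p 0; rewrite !addr0 form0 // addr0. Qed.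

Lemma form_sum u I (r : seq I) (P : pred I) (F : I -> {poly C}) : is_form u ->
  u (\sum_(i <- r | P i) F i) = \sum_(i <- r | P i) u (F i).
Proof. by move=> hu; rewrite (big_morph u (formD hu) (form0 hu)). Qed.

Lemma is_form_scale c u : is_form u -> is_form (fun p => c * u p).
Proof. by move=> hu d p q /=; rewrite hu mulrDr mulrCA. Qed.

Lemma is_form_transpose (T : {poly C} -> {poly C}) u :
  (forall p q c, T (c *: p + q) = c *: T p + T q) ->
  is_form u -> is_form (transpose T u).
Proof. by move=> hT hu c p q; rewrite /transpose hT hu. Qed.

End Forms.

Section DualSequence.
Variable C : comNzRingType.
Variables (B : nat -> {poly C}) (u : nat -> {poly C} -> C).
Hypotheses (hB : MPS B) (hu : dual_seq B u).
Implicit Types (p q : {poly C}) (v w : {poly C} -> C).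

Lemma MPS_B0 : B 0%N = 1.
Proof.
have [mB sB] := hB 0%N; rewrite (size1_polyC (eq_leq sB)).
by move/monicP: mB; rewrite lead_coefE sB => ->.
Qed.

Lemma MPS_span N p : (size p <= N)%N ->
  exists c : nat -> C, p = \sum_(j < N) c j *: B j.
Proof.
elim: N p => [|N IH] p hp.
  by exists (fun=> 0); rewrite big_ord0; apply/eqP; rewrite -size_poly_leq0.
have [mB sB] := hB N.
have BN_N : (B N)`_N = 1 by move/monicP: mB; rewrite lead_coefE sB.
have [|c hc] := IH (p - p`_N *: B N).
  apply/leq_sizeP => j; rewrite leq_eqVlt coefB coefZ => /predU1P [<-|hj].
    by rewrite BN_N mulr1 subrr.
  by rewrite (leq_sizeP _ _ hp j hj) (leq_sizeP _ _ (eq_leq sB) j hj) mulr0 subrr.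
exists (fun j => if j == N then p`_N else c j).
rewrite big_ord_recr /= eqxx (eq_bigr (fun j : 'I_N => c j *: B j)).
  by rewrite -hc subrK.
by move=> [j hj] _ /=; rewrite ltn_eqF.
Qed.

Lemma dual_seq_expansion N p : (size p <= N)%N ->
  p = \sum_(j < N) u j p *: B j.
Proof.
have [hf hd] := hu; move=> /MPS_span [c ->].
apply: eq_bigr => j _; congr (_ *: _).
rewrite form_sum // (bigD1 j) //= formZ // hd eqxx mulr1 big1 ?addr0 // => i /negPf ij.
by rewrite formZ // hd eq_sym [_ == _]ij mulr0.
Qed.

Lemma dual_seq_poly_eq p q : (forall j, u j p = u j q) -> p = q.
Proof.
move=> hpq; pose N := maxn (size p) (size q).
rewrite (@dual_seq_expansion N p) ?leq_maxl // (@dual_seq_expansion N q) ?leq_maxr //.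
by apply: eq_bigr => j _; rewrite hpq.
Qed.

Lemma dual_seq_form_eq v w : is_form v -> is_form w ->
  (forall m, v (B m) = w (B m)) -> v = w.
Proof.
move=> hv hw hvw; apply: boolp.funext => p.
rewrite (@dual_seq_expansion _ p (leqnn _)) !form_sum //.
by apply: eq_bigr => j _; rewrite !formZ // hvw.
Qed.

Lemma lowers_iff_transpose_shifts (T : {poly C} -> {poly C}) (r : nat -> C) :
  (forall p q c, T (c *: p + q) = c *: T p + T q) -> T (B 0%N) = 0 ->
  (forall n, T (B n.+1) = r n *: B n) <->
  (forall n, transpose T (u n) = (fun p => r n * u n.+1 p)).
Proof.
have [hf hd] := hu; move=> hT hT0; split=> hTB n.
- apply: dual_seq_form_eq => [||[|m]].
  + exact: is_form_transpose.
  + exact: is_form_scale.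
  + by rewrite /transpose hT0 form0 // hd mulr0.
  + rewrite /transpose hTB formZ // !hd eqSS [n == m]eq_sym.
    by case: eqP => [->|]; rewrite ?mulr0.
- apply: dual_seq_poly_eq => j.
  have -> : u j (T (B n.+1)) = transpose T (u j) (B n.+1) by [].
  by rewrite hTB formZ // !hd eqSS; case: eqP => [->|]; rewrite ?mulr0.
Qed.

End DualSequence.

Definition rho (C : comNzRingType) (k : nat) (a : nat -> C) (n : nat) : C :=
  n.+1%:R * theta k a n.+1.

Section LambdaOnMonomials.
Variables (C : comNzRingType) (k : nat) (a : nat -> C).

Lemma Dx_Xn m : Dx 'X^m = m.+1%:R *: 'X^m :> {poly C}.
Proof. by rewrite /Dx -exprS derivXn -scaler_nat. Qed.

Lemma DxZ c (p : {poly C}) : Dx (c *: p) = c *: Dx p.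
Proof. by rewrite /Dx -scalerAr derivZ. Qed.

Lemma iter_DxZ i c (p : {poly C}) : iter i (@Dx C) (c *: p) = c *: iter i (@Dx C) p.
Proof. by elim: i => [|i IH] //; rewrite iterS IH DxZ. Qed.

Lemma iter_Dx_Xn i m : iter i (@Dx C) 'X^m = m.+1%:R ^+ i *: 'X^m :> {poly C}.
Proof.
elim: i => [|i IH]; first by rewrite scale1r.
by rewrite iterS IH DxZ Dx_Xn scalerA -exprSr.
Qed.

Lemma Lam_Xn n : Lam k a 'X^(n.+1) = rho k a n *: 'X^n.
Proof.
rewrite /Lam /rho /theta derivXn -scaler_nat mulr_sumr scaler_suml.
by apply: eq_bigr => i _; rewrite iter_DxZ iter_Dx_Xn !scalerA mulrCA.
Qed.

Lemma lowering_rho_neq0 n : lowering (Lam k a) -> rho k a n != 0.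
Proof.
move=> [_ [_ hsz]]; apply/eqP => h.
by have := hsz n.+1 isT; rewrite Lam_Xn h scale0r size_poly0.
Qed.

Lemma fact_prod_theta n :
  n`!%:R * \prod_(1 <= s < n.+1) theta k a s = \prod_(i < n) rho k a i.
Proof.
elim: n => [|n IH]; first by rewrite big_geq // big_ord0 mulr1.
rewrite big_nat_recr //= big_ord_recr /= -IH factS natrM /rho.
by rewrite [RHS]mulrACA [n`!%:R * _]mulrC.
Qed.

End LambdaOnMonomials.

Lemma transpose_shifts_iff_iter (F : fieldType) (T : {poly F} -> {poly F})
    (r : nat -> F) (v : nat -> {poly F} -> F) : (forall n, r n != 0) ->
  (forall n, transpose T (v n) = (fun p => r n * v n.+1 p)) <->
  (forall n, v n = (fun p => (\prod_(i < n) r i)^-1 * iter n (transpose T) (v 0%N) p)).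
Proof.
move=> r0; have P0 n : \prod_(i < n) r i != 0 by apply/prodf_neq0 => i _.
split=> hv.
- suff iterT n : iter n (transpose T) (v 0%N) = (fun p => \prod_(i < n) r i * v n p).
    by move=> n; apply: boolp.funext => p; rewrite iterT mulKf.
  elim: n => [|n IH]; first by apply: boolp.funext => p; rewrite big_ord0 mul1r.
  apply: boolp.funext => p.
  rewrite iterS IH /transpose big_ord_recr /= -mulrA.
  by rewrite -[v n (T p)]/(transpose T (v n) p) hv.
- move=> n; apply: boolp.funext => p.
  rewrite /transpose (hv n) (hv n.+1) big_ord_recr /= invfM.
  by rewrite mulrA [r n * _]mulrCA mulfV // mulr1.
Qed.

Theorem proposition5 (R : realType) (k : nat) (a : nat -> R[i])
    (B : nat -> {poly R[i]}) (u : nat -> {poly R[i]} -> R[i]) :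
  lowering (Lam k a) -> MPS B -> dual_seq B u ->
  let LamT := transpose (Lam k a) in
  let A := forall n : nat,
      B n = ((n.+1)%:R^-1 * (theta k a n.+1)^-1) *: Lam k a (B n.+1) in
  let Bc := forall n : nat,
      LamT (u n) = (fun p => (n.+1%:R * theta k a n.+1) * u n.+1 p) in
  let Cc := forall n : nat,
      u n = (fun p => ((n`!)%:R^-1 * (\prod_(1 <= s < n.+1) theta k a s)^-1)
                        * iter n LamT (u 0%N) p) in
  (A <-> Bc) /\ (Bc <-> Cc).
Proof.
move=> hL hB hu LamT A Bc Cc; have [hlin [hL1 _]] := hL.
have rho0 n : rho k a n != 0 := lowering_rho_neq0 n hL.
have A_lowers : A <-> forall n, Lam k a (B n.+1) = rho k a n *: B n.
  rewrite /A; split=> h n; first by rewrite [in RHS]h -invfM scalerKV ?rho0.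
  by rewrite h -invfM scalerK ?rho0.
have Cc_chain : Cc <-> forall n,
    u n = (fun p => (\prod_(i < n) rho k a i)^-1 * iter n LamT (u 0%N) p).
  by rewrite /Cc; split=> h n; rewrite h -invfM fact_prod_theta.
split.
- apply: iff_trans A_lowers _.
  apply: (@lowers_iff_transpose_shifts _ _ _ hB hu _ (rho k a) hlin).
  by rewrite (MPS_B0 hB) hL1.
- apply: iff_trans _ (iff_sym Cc_chain).
  exact: (@transpose_shifts_iff_iter _ _ (rho k a) u rho0).
Qed.
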